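(* Let $T\in\mathcal{B}(\mathbb{C}^d)$ be power bounded. Then the limit $A_{T,C}:=\lim_{n\to\infty}\frac1n\sum_{j=1}^nT^{*j}T^j$ exists (in norm), and $A_{T,L}=A_{T,C}$ for every Banach limit $L$. Conversely, if the sequence $\frac1n\sum_{j=1}^nT^{*j}T^j$ converges for a matrix $T$, then $T$ is power bounded.
   Context: $T$ is power bounded if $\sup_n\|T^n\|<\infty$. A Banach limit is a linear functional $L$ on $\ell^\infty(\mathbb{N})$, written $\operatorname{L-lim}$, with $\|L\|=1$, agreeing with the ordinary limit on convergent sequences, positive, and shift-invariant ($\operatorname{L-lim}x_n=\operatorname{L-lim}x_{n+1}$). For power bounded $T$, $A_{T,L}$ is the positive operator with $\langle A_{T,L}x,y\rangle=\operatorname{L-lim}_n\langle T^{*n}T^nx,y\rangle$. *)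

From Stdlib Require Import Reals.
Open Scope R_scope.

Definition Cplx : Type := (R * R)%type.
Definition C0 : Cplx := (0, 0).
Definition C1 : Cplx := (1, 0).
Definition Cadd (z w : Cplx) : Cplx := (fst z + fst w, snd z + snd w).
Definition Copp (z : Cplx) : Cplx := (- fst z, - snd z).
Definition Csub (z w : Cplx) : Cplx := Cadd z (Copp w).
Definition Cmul (z w : Cplx) : Cplx :=
  (fst z * fst w - snd z * snd w, fst z * snd w + snd z * fst w).
Definition Cconj (z : Cplx) : Cplx := (fst z, - snd z).
Definition RtoC (r : R) : Cplx := (r, 0).
Definition Cnorm (z : Cplx) : R := sqrt (fst z * fst z + snd z * snd z).

Fixpoint csum (n : nat) (f : nat -> Cplx) : Cplx :=
  match n with O => C0 | S k => Cadd (csum k f) (f k) end.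

(* ---------- vectors of Cplx^d and d x d matrices (indices < d are used) ---------- *)
Definition Vec := nat -> Cplx.
Definition Mat := nat -> nat -> Cplx.

Definition mat_vec (d : nat) (A : Mat) (x : Vec) : Vec :=
  fun i => csum d (fun j => Cmul (A i j) (x j)).
Definition mmul (d : nat) (A B : Mat) : Mat :=
  fun i k => csum d (fun j => Cmul (A i j) (B j k)).
Definition madd (A B : Mat) : Mat := fun i j => Cadd (A i j) (B i j).
Definition msub (A B : Mat) : Mat := fun i j => Csub (A i j) (B i j).
Definition mscale (a : Cplx) (A : Mat) : Mat := fun i j => Cmul a (A i j).
Definition mzero : Mat := fun _ _ => C0.
Definition mid : Mat := fun i j => if Nat.eqb i j then C1 else C0.
Definition madj (A : Mat) : Mat := fun i j => Cconj (A j i).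
Fixpoint mpow (d : nat) (A : Mat) (n : nat) : Mat :=
  match n with O => mid | S k => mmul d A (mpow d A k) end.

Definition inner (d : nat) (x y : Vec) : Cplx :=
  csum d (fun i => Cmul (x i) (Cconj (y i))).
Definition vnorm (d : nat) (x : Vec) : R :=
  sqrt (fst (inner d x x)).

Definition opnorm_le (d : nat) (A : Mat) (M : R) : Prop :=
  forall x : Vec, vnorm d (mat_vec d A x) <= M * vnorm d x.

Definition power_bounded (d : nat) (T : Mat) : Prop :=
  exists M : R, forall n : nat, opnorm_le d (mpow d T n) M.

Definition mat_cv_norm (d : nat) (An : nat -> Mat) (A : Mat) : Prop :=
  forall eps : R, eps > 0 -> exists N : nat, forall n : nat, (n >= N)%nat ->
    opnorm_le d (msub (An n) A) eps.

Fixpoint msum (n : nat) (F : nat -> Mat) : Mat :=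
  match n with O => mzero | S k => madd (msum k F) (F k) end.
Definition cesaro (d : nat) (T : Mat) (n : nat) : Mat :=
  mscale (RtoC (/ INR n))
    (msum n (fun k => mmul d (mpow d (madj T) (S k)) (mpow d T (S k)))).

Definition bounded_seq (s : nat -> Cplx) : Prop :=
  exists M : R, forall n, Cnorm (s n) <= M.
Definition Ccv (s : nat -> Cplx) (l : Cplx) : Prop :=
  forall eps : R, eps > 0 -> exists N : nat, forall n : nat, (n >= N)%nat ->
    Cnorm (Csub (s n) l) < eps.

Record BanachLimit (L : (nat -> Cplx) -> Cplx) : Prop := {
  bl_linear : forall (a : Cplx) (s t : nat -> Cplx), bounded_seq s -> bounded_seq t ->
      L (fun n => Cadd (Cmul a (s n)) (t n)) = Cadd (Cmul a (L s)) (L t);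
  (* ||L|| <= 1; together with bl_limit on the constant 1 this gives ||L|| = 1 *)
  bl_norm : forall (s : nat -> Cplx) (M : R), (forall n, Cnorm (s n) <= M) ->
      Cnorm (L s) <= M;
  bl_limit : forall (s : nat -> Cplx) (l : Cplx), Ccv s l -> L s = l;
  bl_positive : forall s : nat -> Cplx, bounded_seq s ->
      (forall n, snd (s n) = 0 /\ 0 <= fst (s n)) ->
      snd (L s) = 0 /\ 0 <= fst (L s);
  bl_shift : forall s : nat -> Cplx, bounded_seq s -> L (fun n => s (S n)) = L s
}.

(* Write g_n(x, y) = (1/n) sum_{k=1}^n <T^k x, T^k y> for the form of the n-th Cesàro mean.
   If ||T^k|| <= M for all k, the forms g_n are bounded by M^2, so by Bolzano-Weierstrass
   (entrywise) they have a cluster point P. Since g_n(Tx, Ty) - g_n(x, y) is O(1/n), P is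
   T-invariant: <P T x, T y> = <P x, y>. Averaging g_m along the orbit then shows
   g_n = (1/n) sum_k g_m(T^k x, T^k y) + O(m/n), and each term is close to <P x, y>, so g_n -> P
   uniformly. A Banach limit is shift invariant, hence cannot distinguish <T^n x, T^n y> from its
   averages g_m(T^n x, T^n y), which gives L-lim <T^n x, T^n y> = <P x, y>.
   Conversely, if the Cesàro means converge to A, then q(x) = Re <A x, x> is T-invariant, and for
   a fixed n0 every z has some j <= n0 with |T^j z|^2 <= q(z) + |z|^2/4. Hence the orbit of x keeps
   returning, within n0 steps, to vectors of norm at most (||A|| + 2)|x|, which bounds ||T^m||. *)

From Stdlib Require Import Arith Reals Lra Lia Psatz FunctionalExtensionality ClassicalEpsilon List.
Open Scope R_scope.

(** * Complex numbers and finite sums *)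

Lemma Ceq (z w : Cplx) : fst z = fst w -> snd z = snd w -> z = w.
Proof. destruct z, w; simpl; intros; subst; reflexivity. Qed.

Ltac cunfold := unfold Csub, Cadd, Cmul, Copp, Cconj, RtoC, C0, C1 in *; simpl in *.
Ltac cring := apply Ceq; cunfold; ring.

Lemma Cnorm_nonneg z : 0 <= Cnorm z.
Proof. apply sqrt_pos. Qed.

Lemma Cnorm_sq z : Cnorm z * Cnorm z = fst z * fst z + snd z * snd z.
Proof. apply sqrt_sqrt. nra. Qed.

Lemma Cnorm_mul z w : Cnorm (Cmul z w) = Cnorm z * Cnorm w.
Proof. unfold Cnorm. rewrite <- sqrt_mult by nra. f_equal. cunfold. ring. Qed.

Lemma Cnorm_conj z : Cnorm (Cconj z) = Cnorm z.
Proof. unfold Cnorm. cunfold. f_equal. ring. Qed.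

Lemma Cnorm_opp z : Cnorm (Copp z) = Cnorm z.
Proof. unfold Cnorm. cunfold. f_equal. ring. Qed.

Lemma Cnorm_RtoC r : Cnorm (RtoC r) = Rabs r.
Proof. unfold Cnorm. cunfold. rewrite Rmult_0_l, Rplus_0_r. apply sqrt_Rsqr_abs. Qed.

Lemma Cnorm_C0 : Cnorm C0 = 0.
Proof. unfold Cnorm. cunfold. rewrite Rmult_0_l, Rplus_0_r. apply sqrt_0. Qed.

Lemma Rabs_fst_le_Cnorm z : Rabs (fst z) <= Cnorm z.
Proof. unfold Cnorm. rewrite <- sqrt_Rsqr_abs. apply sqrt_le_1_alt. unfold Rsqr. nra. Qed.

Lemma Rabs_snd_le_Cnorm z : Rabs (snd z) <= Cnorm z.
Proof. unfold Cnorm. rewrite <- sqrt_Rsqr_abs. apply sqrt_le_1_alt. unfold Rsqr. nra. Qed.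

Lemma sqrt_le_of_le_sq a b : 0 <= b -> a <= b * b -> sqrt a <= b.
Proof. intros Hb H. rewrite <- (sqrt_square b Hb). apply sqrt_le_1_alt, H. Qed.

Lemma Cnorm_le_Rabs_parts z : Cnorm z <= Rabs (fst z) + Rabs (snd z).
Proof.
  apply sqrt_le_of_le_sq.
  - pose proof (Rabs_pos (fst z)); pose proof (Rabs_pos (snd z)); lra.
  - assert (Ef : Rabs (fst z) * Rabs (fst z) = fst z * fst z)
      by (rewrite <- Rabs_mult; apply Rabs_right; nra).
    assert (Es : Rabs (snd z) * Rabs (snd z) = snd z * snd z)
      by (rewrite <- Rabs_mult; apply Rabs_right; nra).
    pose proof (Rabs_pos (fst z)); pose proof (Rabs_pos (snd z)); nra.
Qed.

Lemma Cnorm_add z w : Cnorm (Cadd z w) <= Cnorm z + Cnorm w.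
Proof.
  pose proof (Cnorm_sq z) as Hz; pose proof (Cnorm_sq w) as Hw.
  pose proof (Cnorm_nonneg z); pose proof (Cnorm_nonneg w).
  destruct z as [a b], w as [c e]; simpl in *.
  assert (Hcs : a * c + b * e <= Cnorm (a, b) * Cnorm (c, e)).
  { assert ((a * c + b * e) * (a * c + b * e)
            <= (Cnorm (a, b) * Cnorm (a, b)) * (Cnorm (c, e) * Cnorm (c, e))).
    { rewrite Hz, Hw. pose proof (Rle_0_sqr (a * e - b * c)). unfold Rsqr in *. nra. }
    assert (0 <= Cnorm (a, b) * Cnorm (c, e)) by nra. nra. }
  apply sqrt_le_of_le_sq; cunfold; nra.
Qed.

Lemma Cnorm_sub z w : Cnorm (Csub z w) <= Cnorm z + Cnorm w.
Proof. unfold Csub. rewrite <- (Cnorm_opp w). apply Cnorm_add. Qed.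

Lemma Cnorm_sub_sym z w : Cnorm (Csub z w) = Cnorm (Csub w z).
Proof. replace (Csub w z) with (Copp (Csub z w)) by cring. now rewrite Cnorm_opp. Qed.

Lemma Cnorm_sub_triangle z w u : Cnorm (Csub z u) <= Cnorm (Csub z w) + Cnorm (Csub w u).
Proof. replace (Csub z u) with (Cadd (Csub z w) (Csub w u)) by cring. apply Cnorm_add. Qed.

Lemma Cnorm_eq0 z : Cnorm z = 0 -> z = C0.
Proof.
  intros H. pose proof (Cnorm_sq z) as Hs. rewrite H in Hs.
  destruct z as [a b]; simpl in *. unfold C0; f_equal; nra.
Qed.

Lemma Ceq_of_Cnorm_sub_le z w K :
  (forall e, e > 0 -> Cnorm (Csub z w) <= e * K) -> z = w.
Proof.
  intros H. assert (Hzw : Csub z w = C0).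
  { apply Cnorm_eq0. pose proof (Cnorm_nonneg (Csub z w)).
    destruct (Rle_dec K 0).
    - specialize (H 1 ltac:(lra)). lra.
    - destruct (Req_dec (Cnorm (Csub z w)) 0) as [|Hne]; [assumption|].
      specialize (H (Cnorm (Csub z w) / (2 * K)) ltac:(apply Rdiv_lt_0_compat; lra)).
      replace (Cnorm (Csub z w) / (2 * K) * K) with (Cnorm (Csub z w) / 2) in H
        by (field; lra). lra. }
  apply Ceq; cunfold; injection Hzw; lra.
Qed.

Fixpoint rsum (n : nat) (f : nat -> R) : R :=
  match n with O => 0 | S k => rsum k f + f k end.

Lemma fst_csum n f : fst (csum n f) = rsum n (fun k => fst (f k)).
Proof. induction n; simpl; [reflexivity|now rewrite IHn]. Qed.

Lemma snd_csum n f : snd (csum n f) = rsum n (fun k => snd (f k)).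
Proof. induction n; simpl; [reflexivity|now rewrite IHn]. Qed.

Lemma csum_ext n f g : (forall k, (k < n)%nat -> f k = g k) -> csum n f = csum n g.
Proof.
  induction n; intros H; simpl; [reflexivity|].
  rewrite IHn by (intros; apply H; lia). rewrite H by lia. reflexivity.
Qed.

Lemma rsum_ext n f g : (forall k, (k < n)%nat -> f k = g k) -> rsum n f = rsum n g.
Proof.
  induction n; intros H; simpl; [reflexivity|].
  rewrite IHn by (intros; apply H; lia). rewrite H by lia. reflexivity.
Qed.

Lemma csum_add n f g : csum n (fun k => Cadd (f k) (g k)) = Cadd (csum n f) (csum n g).
Proof. induction n; simpl; [cring|]. rewrite IHn. cring. Qed.

Lemma csum_sub n f g : csum n (fun k => Csub (f k) (g k)) = Csub (csum n f) (csum n g).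
Proof. induction n; simpl; [cring|]. rewrite IHn. cring. Qed.

Lemma csum_mull n a f : csum n (fun k => Cmul a (f k)) = Cmul a (csum n f).
Proof. induction n; simpl; [cring|]. rewrite IHn. cring. Qed.

Lemma csum_mulr n a f : csum n (fun k => Cmul (f k) a) = Cmul (csum n f) a.
Proof. induction n; simpl; [cring|]. rewrite IHn. cring. Qed.

Lemma csum_conj n f : csum n (fun k => Cconj (f k)) = Cconj (csum n f).
Proof. induction n; simpl; [cring|]. rewrite IHn. cring. Qed.

Lemma csum_const n z : csum n (fun _ => z) = Cmul (RtoC (INR n)) z.
Proof. induction n; [cring|]. cbn [csum]. rewrite IHn, S_INR. cring. Qed.

Lemma csum_swap n m f :
  csum n (fun i => csum m (fun j => f i j)) = csum m (fun j => csum n (fun i => f i j)).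
Proof.
  induction n; simpl.
  - rewrite (csum_const m C0). cring.
  - rewrite IHn, <- csum_add. reflexivity.
Qed.

Lemma csum_delta n j g :
  (j < n)%nat -> csum n (fun k => if Nat.eqb k j then g k else C0) = g j.
Proof.
  induction n; intros Hj; [lia|]. simpl.
  destruct (Nat.eqb_spec n j) as [->|Hne].
  - rewrite (csum_ext _ _ (fun _ => C0)), csum_const; [cring|].
    intros k Hk. destruct (Nat.eqb_spec k j); [lia|reflexivity].
  - rewrite IHn by lia. cring.
Qed.

Lemma csum_telescope n u : csum n (fun k => Csub (u k) (u (S k))) = Csub (u 0%nat) (u n).
Proof. induction n; simpl; [cring|]. rewrite IHn. cring. Qed.

Lemma rsum_le n f g : (forall k, (k < n)%nat -> f k <= g k) -> rsum n f <= rsum n g.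
Proof.
  induction n; intros H; simpl; [lra|].
  pose proof (IHn (fun k Hk => H k ltac:(lia))). pose proof (H n ltac:(lia)). lra.
Qed.

Lemma rsum_const n c : rsum n (fun _ => c) = INR n * c.
Proof. induction n; [simpl; ring|]. cbn [rsum]. rewrite IHn, S_INR. ring. Qed.

Lemma rsum_nonneg n f : (forall k, (k < n)%nat -> 0 <= f k) -> 0 <= rsum n f.
Proof.
  intros H. apply Rle_trans with (rsum n (fun _ => 0)).
  - rewrite rsum_const. lra.
  - now apply rsum_le.
Qed.

Lemma rsum_mull n a f : rsum n (fun k => a * f k) = a * rsum n f.
Proof. induction n; simpl; [ring|]. rewrite IHn. ring. Qed.

Lemma rsum_add n f g : rsum n (fun k => f k + g k) = rsum n f + rsum n g.
Proof. induction n; simpl; [ring|]. rewrite IHn. ring. Qed.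

Lemma rsum_succ_l n f : rsum (S n) f = f 0%nat + rsum n (fun k => f (S k)).
Proof. induction n; simpl in *; [ring|]. rewrite IHn. ring. Qed.

Lemma le_rsum_term n f j :
  (forall k, (k < n)%nat -> 0 <= f k) -> (j < n)%nat -> f j <= rsum n f.
Proof.
  induction n; intros H Hj; [lia|]. simpl.
  pose proof (rsum_nonneg n f (fun k Hk => H k ltac:(lia))).
  destruct (Nat.eq_dec j n) as [->|Hne]; [lra|].
  pose proof (IHn (fun k Hk => H k ltac:(lia)) ltac:(lia)). pose proof (H n ltac:(lia)). lra.
Qed.

Lemma Cnorm_csum n f : Cnorm (csum n f) <= rsum n (fun k => Cnorm (f k)).
Proof.
  induction n; simpl; [rewrite Cnorm_C0; lra|].
  eapply Rle_trans; [apply Cnorm_add|lra].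
Qed.

Lemma discriminant_nonpos A S B :
  0 <= A -> 0 <= B -> (forall t, 0 <= A * t * t - 2 * S * t + B) -> S * S <= A * B.
Proof.
  intros HA HB H. destruct (Req_dec A 0) as [->|HA0].
  - destruct (Req_dec S 0) as [->|HS]; [lra|].
    specialize (H ((B + 1) / (2 * S))).
    replace (0 * ((B + 1) / (2 * S)) * ((B + 1) / (2 * S)) - 2 * S * ((B + 1) / (2 * S)) + B)
      with (-1) in H by (field; lra). lra.
  - specialize (H (S / A)).
    replace (A * (S / A) * (S / A) - 2 * S * (S / A) + B) with ((A * B - S * S) / A) in H
      by (field; lra).
    apply Rmult_le_compat_r with (r := A) in H; [|lra].
    unfold Rdiv in H. rewrite Rmult_0_l, Rmult_assoc, Rinv_l, Rmult_1_r in H by lra. lra.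
Qed.

Lemma rsum_cauchy_schwarz n a b :
  rsum n (fun k => a k * b k)
  <= sqrt (rsum n (fun k => a k * a k)) * sqrt (rsum n (fun k => b k * b k)).
Proof.
  set (S := rsum n (fun k => a k * b k)).
  set (A := rsum n (fun k => a k * a k)); set (B := rsum n (fun k => b k * b k)).
  assert (HA : 0 <= A) by (apply rsum_nonneg; intros; nra).
  assert (HB : 0 <= B) by (apply rsum_nonneg; intros; nra).
  assert (Hdisc : S * S <= A * B).
  { apply discriminant_nonpos; [exact HA|exact HB|]. intros t.
    replace (A * t * t - 2 * S * t + B)
      with (rsum n (fun k => (t * a k - b k) * (t * a k - b k))).
    - apply rsum_nonneg. intros. apply Rle_0_sqr.
    - rewrite (rsum_ext _ _ (fun k => t * t * (a k * a k) + (- 2 * t * (a k * b k) + b k * b k)))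
        by (intros; ring).
      rewrite !rsum_add, !rsum_mull. unfold A, S, B. ring. }
  rewrite <- sqrt_mult by assumption.
  destruct (Rle_dec S 0); [pose proof (sqrt_pos (A * B)); lra|].
  rewrite <- (sqrt_square S) by lra. now apply sqrt_le_1_alt.
Qed.

Lemma Cnorm_average_le n (f : nat -> Cplx) c :
  (forall k, (k < n)%nat -> Cnorm (f k) <= c) -> 0 <= c ->
  Cnorm (Cmul (RtoC (/ INR n)) (csum n f)) <= c.
Proof.
  intros Hf Hc. destruct n as [|n]; [simpl; rewrite Cnorm_mul, Cnorm_C0; lra|].
  rewrite Cnorm_mul, Cnorm_RtoC. assert (0 < INR (S n)) by (apply lt_0_INR; lia).
  rewrite Rabs_right by (apply Rle_ge, Rlt_le, Rinv_0_lt_compat; lra).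
  apply Rle_trans with (/ INR (S n) * rsum (S n) (fun _ => c)).
  - apply Rmult_le_compat_l; [apply Rlt_le, Rinv_0_lt_compat; lra|].
    eapply Rle_trans; [apply Cnorm_csum|]. now apply rsum_le.
  - rewrite rsum_const. right. field. lra.
Qed.

Lemma average_const n z : (1 <= n)%nat -> Cmul (RtoC (/ INR n)) (csum n (fun _ => z)) = z.
Proof.
  intros Hn. rewrite csum_const. assert (0 < INR n) by (apply lt_0_INR; lia).
  apply Ceq; cunfold; field; lra.
Qed.

Lemma average_sub_const n f z : (1 <= n)%nat ->
  Cmul (RtoC (/ INR n)) (csum n (fun k => Csub (f k) z))
  = Csub (Cmul (RtoC (/ INR n)) (csum n f)) z.
Proof.
  intros Hn. rewrite csum_sub, csum_const. assert (0 < INR n) by (apply lt_0_INR; lia).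
  apply Ceq; cunfold; field; lra.
Qed.

Lemma Cnorm_csum_sub_shift_le (w : nat -> Cplx) B n j :
  (forall k, Cnorm (w k) <= B) ->
  Cnorm (csum n (fun k => Csub (w k) (w (k + j)%nat))) <= 2 * INR j * B.
Proof.
  intros HB. induction j.
  - rewrite (csum_ext _ _ (fun _ => C0)), csum_const, Cnorm_mul, Cnorm_C0; [simpl; lra|].
    intros. rewrite Nat.add_0_r. cring.
  - rewrite (csum_ext _ _ (fun k => Cadd (Csub (w k) (w (k + j)%nat))
                                       (Csub (w (k + j)%nat) (w (S k + j)%nat)))).
    2: { intros. replace (k + S j)%nat with (S k + j)%nat by lia. cring. }
    rewrite csum_add, (csum_telescope n (fun k => w (k + j)%nat)). cbn [Nat.add].
    eapply Rle_trans; [apply Cnorm_add|].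
    pose proof (Cnorm_sub (w j) (w (n + j)%nat)). pose proof (HB j). pose proof (HB (n + j)%nat).
    rewrite S_INR. lra.
Qed.

Lemma average_sub_double_average (w : nat -> Cplx) n m : (1 <= n)%nat -> (1 <= m)%nat ->
  Csub (Cmul (RtoC (/ INR n)) (csum n w))
       (Cmul (RtoC (/ INR n))
          (csum n (fun k => Cmul (RtoC (/ INR m)) (csum m (fun i => w (k + S i)%nat)))))
  = Cmul (RtoC (/ INR n * / INR m))
         (csum m (fun i => csum n (fun k => Csub (w k) (w (k + S i)%nat)))).
Proof.
  intros Hn Hm.
  rewrite (csum_ext m _ (fun i => Csub (csum n w) (csum n (fun k => w (k + S i)%nat))))
    by (intros; apply csum_sub).
  rewrite csum_sub, csum_const, csum_swap, csum_mull.
  assert (0 < INR n) by (apply lt_0_INR; lia). assert (0 < INR m) by (apply lt_0_INR; lia).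
  apply Ceq; cunfold; field; lra.
Qed.

Lemma exists_term_le_of_rsum_le n f c : (1 <= n)%nat -> rsum n f <= INR n * c ->
  exists j, (j < n)%nat /\ f j <= c.
Proof.
  induction n as [|n IH]; intros Hn Hsum; [lia|].
  destruct (Rle_dec (f n) c) as [Hle|Hgt]; [exists n; split; [lia|exact Hle]|].
  cbn [rsum] in Hsum. rewrite S_INR in Hsum.
  destruct n as [|n]; [simpl in Hsum; lra|].
  destruct (IH ltac:(lia) ltac:(lra)) as [j [Hj Hfj]]. exists j. split; [lia|exact Hfj].
Qed.

(** * Real sequences *)

Lemma Un_cv_const c : Un_cv (fun _ => c) c.
Proof. intros e He. exists 0%nat. intros. unfold Rdist. rewrite Rminus_diag, Rabs_R0. lra. Qed.

Lemma Un_cv_inv_INR_S : Un_cv (fun n => / INR (S n)) 0.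
Proof.
  intros e He. destruct (RinvN_cv He) as [N HN]. exists N. intros n Hn.
  specialize (HN n Hn). simpl in HN. now rewrite S_INR.
Qed.

Lemma eventually_inv_INR_lt e :
  e > 0 -> exists N, forall n, (n >= N)%nat -> 0 < INR n /\ / INR n < e.
Proof.
  intros He. destruct (Un_cv_inv_INR_S e He) as [N HN]. exists (S N). intros n Hn.
  specialize (HN (n - 1)%nat ltac:(lia)). replace (S (n - 1)) with n in HN by lia.
  assert (0 < INR n) by (apply lt_0_INR; lia).
  unfold Rdist in HN. rewrite Rminus_0_r, Rabs_right in HN by (left; now apply Rinv_0_lt_compat).
  split; assumption.
Qed.

Definition strictly_increasing (p : nat -> nat) : Prop := forall n, (p n < p (S n))%nat.

Lemma strictly_increasing_ge p : strictly_increasing p -> forall n, (n <= p n)%nat.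
Proof. intros H n. induction n; [lia|]. specialize (H n). lia. Qed.

Lemma strictly_increasing_comp p q :
  strictly_increasing p -> strictly_increasing q -> strictly_increasing (fun n => p (q n)).
Proof.
  intros Hp Hq n.
  assert (Hmono : forall a b, (a < b)%nat -> (p a < p b)%nat).
  { intros a b Hab. induction Hab; [apply Hp|]. specialize (Hp m). lia. }
  apply Hmono, Hq.
Qed.

Lemma bounded_subseq_cv (w : nat -> R) B : (forall n, Rabs (w n) <= B) ->
  exists psi l, strictly_increasing psi /\ Un_cv (fun n => w (psi n)) l.
Proof.
  intros HB.
  destruct (Bolzano_Weierstrass w (fun c => -B <= c <= B) (compact_P3 (-B) B)) as [l Hl].
  { intros n. specialize (HB n). unfold Rabs in HB. destruct Rcase_abs in HB; lra. }
  assert (Hnear : forall N k, exists m, (N <= m)%nat /\ Rabs (w m - l) < RinvN k).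
  { intros N k.
    assert (Hnbh : neighbourhood (disc l (RinvN k)) l) by (now exists (RinvN k)).
    destruct (Hl _ N Hnbh) as [m Hm]. now exists m. }
  set (f N k := proj1_sig (constructive_indefinite_description _ (Hnear N k))).
  assert (Hf : forall N k, (N <= f N k)%nat /\ Rabs (w (f N k) - l) < RinvN k)
    by (intros; apply proj2_sig).
  set (psi := fix psi (n : nat) : nat :=
         match n with O => f O O | S k => f (S (psi k)) (S k) end).
  assert (Hpsi : forall n, Rabs (w (psi n) - l) < RinvN n) by (intros [|n]; apply Hf).
  exists psi, l. split.
  - intros n. simpl. destruct (Hf (S (psi n)) (S n)). lia.
  - intros e He. destruct (RinvN_cv He) as [N HN]. exists N. intros n Hn.
    specialize (HN n Hn). specialize (Hpsi n). unfold Rdist in *.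
    rewrite Rminus_0_r, Rabs_right in HN by (left; apply cond_pos). lra.
Qed.

Lemma bounded_subseq_cv_list {I : Type} (cs : list I) (u : I -> nat -> R) B :
  (forall c n, In c cs -> Rabs (u c n) <= B) ->
  exists psi l, strictly_increasing psi /\ forall e, e > 0 -> exists N, forall n, (n >= N)%nat ->
    forall c, In c cs -> Rabs (u c (psi n) - l c) < e.
Proof.
  induction cs as [|c0 cs IH]; intros HB.
  - exists (fun n => n), (fun _ => 0). split; [intros n; lia|].
    intros e He. exists 0%nat. intros n _ c [].
  - destruct IH as [p1 [l1 [Hp1 H1]]]; [intros c n Hc; apply HB; now right|].
    destruct (bounded_subseq_cv (fun n => u c0 (p1 n)) B) as [p2 [lc [Hp2 H2]]];
      [intros; apply HB; now left|].
    exists (fun n => p1 (p2 n)),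
      (fun c => if excluded_middle_informative (c = c0) then lc else l1 c).
    split; [now apply strictly_increasing_comp|].
    intros e He. destruct (H1 e He) as [N1 HN1], (H2 e He) as [N2 HN2].
    exists (Nat.max N1 N2). intros n Hn c Hc.
    destruct (excluded_middle_informative (c = c0)) as [->|Hne].
    + apply (HN2 n). lia.
    + destruct Hc as [->|Hc]; [congruence|].
      apply HN1; [|exact Hc]. pose proof (strictly_increasing_ge p2 Hp2 n). lia.
Qed.

Lemma mat_seq_subseq_cv d (A : nat -> Mat) b :
  (forall n i j, (i < d)%nat -> (j < d)%nat -> Cnorm (A n i j) <= b) ->
  exists psi P, strictly_increasing psi /\ forall e, e > 0 -> exists N, forall n, (n >= N)%nat ->
    forall i j, (i < d)%nat -> (j < d)%nat -> Cnorm (Csub (A (psi n) i j) (P i j)) <= e.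
Proof.
  intros Hb.
  set (coords := list_prod (list_prod (seq 0 d) (seq 0 d)) (true :: false :: nil)).
  set (u := fun (c : nat * nat * bool) n => let '(i, j, re) := c in
         if re then fst (A n i j) else snd (A n i j)).
  assert (Hcoords : forall i j re, (i < d)%nat -> (j < d)%nat -> In (i, j, re) coords).
  { intros i j re Hi Hj. apply in_prod; [apply in_prod; apply in_seq; lia|].
    destruct re; simpl; auto. }
  assert (Hu : forall c n, In c coords -> Rabs (u c n) <= b).
  { intros [[i j] re] n Hc.
    apply in_prod_iff in Hc as [Hij _]. apply in_prod_iff in Hij as [Hi Hj].
    apply in_seq in Hi, Hj. pose proof (Hb n i j ltac:(lia) ltac:(lia)).
    destruct re; unfold u; [pose proof (Rabs_fst_le_Cnorm (A n i j))
                           |pose proof (Rabs_snd_le_Cnorm (A n i j))]; lra. }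
  destruct (bounded_subseq_cv_list coords u b Hu) as [psi [l [Hpsi Hl]]].
  exists psi, (fun i j => (l (i, j, true), l (i, j, false))). split; [exact Hpsi|].
  intros e He. destruct (Hl (e / 2) ltac:(lra)) as [N HN]. exists N. intros n Hn i j Hi Hj.
  pose proof (HN n Hn (i, j, true) (Hcoords i j true Hi Hj)) as Hre.
  pose proof (HN n Hn (i, j, false) (Hcoords i j false Hi Hj)) as Him.
  eapply Rle_trans; [apply Cnorm_le_Rabs_parts|].
  unfold u in Hre, Him. unfold Csub, Cadd, Copp. cbn [fst snd]. unfold Rminus in *. lra.
Qed.

(** * Vectors and matrices *)

Section Vectors.
Variable d : nat.

Definition veq (u v : Vec) : Prop := forall i, (i < d)%nat -> u i = v i.

Lemma inner_ext u u' y y' : veq u u' -> veq y y' -> inner d u y = inner d u' y'.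
Proof. intros Hu Hy. apply csum_ext. intros k Hk. now rewrite Hu, Hy. Qed.

Lemma mat_vec_ext A x x' : veq x x' -> mat_vec d A x = mat_vec d A x'.
Proof. intros H. extensionality i. apply csum_ext. intros k Hk. now rewrite H. Qed.

Lemma vnorm_ext u v : veq u v -> vnorm d u = vnorm d v.
Proof. intros H. unfold vnorm. now rewrite (inner_ext u v u v). Qed.

Lemma fst_inner_self x : fst (inner d x x) = rsum d (fun i => Cnorm (x i) * Cnorm (x i)).
Proof. unfold inner. rewrite fst_csum. apply rsum_ext. intros. rewrite Cnorm_sq. cunfold. ring. Qed.

Lemma snd_inner_self x : snd (inner d x x) = 0.
Proof.
  unfold inner. rewrite snd_csum, (rsum_ext _ _ (fun _ => 0)), rsum_const; [ring|].
  intros. cunfold. ring.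
Qed.

Lemma vnorm_nonneg x : 0 <= vnorm d x.
Proof. apply sqrt_pos. Qed.

Lemma vnorm_sq x : vnorm d x * vnorm d x = fst (inner d x x).
Proof.
  apply sqrt_sqrt. rewrite fst_inner_self.
  apply rsum_nonneg. intros k _. pose proof (Cnorm_nonneg (x k)). nra.
Qed.

Lemma inner_self x : inner d x x = RtoC (vnorm d x * vnorm d x).
Proof. apply Ceq; cunfold; [now rewrite vnorm_sq|apply snd_inner_self]. Qed.

Lemma Cnorm_coord_le_vnorm x i : (i < d)%nat -> Cnorm (x i) <= vnorm d x.
Proof.
  intros Hi. unfold vnorm. rewrite fst_inner_self.
  rewrite <- (sqrt_square (Cnorm (x i))) by apply Cnorm_nonneg.
  apply sqrt_le_1_alt, (le_rsum_term d (fun i => Cnorm (x i) * Cnorm (x i))); [|exact Hi].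
  intros k _. pose proof (Cnorm_nonneg (x k)). nra.
Qed.

Lemma inner_cauchy_schwarz x y : Cnorm (inner d x y) <= vnorm d x * vnorm d y.
Proof.
  unfold vnorm. rewrite !fst_inner_self.
  eapply Rle_trans; [apply Cnorm_csum|].
  eapply Rle_trans; [|apply (rsum_cauchy_schwarz d (fun i => Cnorm (x i)) (fun i => Cnorm (y i)))].
  apply rsum_le. intros. rewrite Cnorm_mul, Cnorm_conj. lra.
Qed.

Lemma mat_vec_mmul A B x : mat_vec d (mmul d A B) x = mat_vec d A (mat_vec d B x).
Proof.
  extensionality i. unfold mat_vec, mmul.
  transitivity (csum d (fun k => csum d (fun j => Cmul (A i j) (Cmul (B j k) (x k))))).
  - apply csum_ext. intros. rewrite <- csum_mulr. apply csum_ext. intros. cring.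
  - rewrite csum_swap. apply csum_ext. intros. now rewrite <- csum_mull.
Qed.

Lemma mat_vec_mid x : veq (mat_vec d mid x) x.
Proof.
  intros i Hi. unfold mat_vec, mid. rewrite <- (csum_delta d i x Hi).
  apply csum_ext. intros k _. rewrite Nat.eqb_sym. destruct (Nat.eqb k i); cring.
Qed.

Lemma inner_madj A u y : inner d (mat_vec d (madj A) u) y = inner d u (mat_vec d A y).
Proof.
  unfold inner, mat_vec, madj.
  transitivity
    (csum d (fun i => csum d (fun j => Cmul (Cconj (A j i)) (Cmul (u j) (Cconj (y i)))))).
  - apply csum_ext. intros. rewrite <- csum_mulr. apply csum_ext. intros. cring.
  - rewrite csum_swap. apply csum_ext. intros.
    rewrite <- csum_conj, <- csum_mull. apply csum_ext. intros. cring.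
Qed.

Lemma inner_madd A B x y :
  inner d (mat_vec d (madd A B) x) y = Cadd (inner d (mat_vec d A x) y) (inner d (mat_vec d B x) y).
Proof.
  unfold inner, mat_vec, madd. rewrite <- csum_add. apply csum_ext. intros.
  rewrite (csum_ext _ _ (fun j => Cadd (Cmul (A k j) (x j)) (Cmul (B k j) (x j))))
    by (intros; cring).
  rewrite csum_add. cring.
Qed.

Lemma inner_msub A B x y :
  inner d (mat_vec d (msub A B) x) y = Csub (inner d (mat_vec d A x) y) (inner d (mat_vec d B x) y).
Proof.
  unfold inner, mat_vec, msub. rewrite <- csum_sub. apply csum_ext. intros.
  rewrite (csum_ext _ _ (fun j => Csub (Cmul (A k j) (x j)) (Cmul (B k j) (x j))))
    by (intros; cring).
  rewrite csum_sub. cring.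
Qed.

Lemma inner_mscale a A x y :
  inner d (mat_vec d (mscale a A) x) y = Cmul a (inner d (mat_vec d A x) y).
Proof.
  unfold inner, mat_vec, mscale. rewrite <- csum_mull. apply csum_ext. intros.
  rewrite (csum_ext _ _ (fun j => Cmul a (Cmul (A k j) (x j)))) by (intros; cring).
  rewrite csum_mull. cring.
Qed.

Lemma inner_msum n F x y :
  inner d (mat_vec d (msum n F) x) y = csum n (fun k => inner d (mat_vec d (F k) x) y).
Proof.
  induction n; simpl; [|now rewrite inner_madd, IHn].
  unfold inner, mat_vec, mzero.
  rewrite (csum_ext _ _ (fun _ => C0)), csum_const; [cring|].
  intros. rewrite (csum_ext _ _ (fun _ => C0)), csum_const by (intros; cring). cring.
Qed.

Definition basis_vec (j : nat) : Vec := fun l => if Nat.eqb l j then C1 else C0.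

Lemma inner_basis_vec A i j :
  (i < d)%nat -> (j < d)%nat -> inner d (mat_vec d A (basis_vec j)) (basis_vec i) = A i j.
Proof.
  intros Hi Hj. transitivity (mat_vec d A (basis_vec j) i).
  - unfold inner. rewrite <- (csum_delta d i (mat_vec d A (basis_vec j)) Hi).
    apply csum_ext. intros l _. unfold basis_vec. destruct (Nat.eqb l i); cring.
  - unfold mat_vec. rewrite <- (csum_delta d j (A i) Hj).
    apply csum_ext. intros k _. unfold basis_vec. destruct (Nat.eqb k j); cring.
Qed.

Lemma vnorm_basis_vec j : (j < d)%nat -> vnorm d (basis_vec j) = 1.
Proof.
  intros Hj. unfold vnorm. rewrite <- sqrt_1. f_equal.
  replace (inner d (basis_vec j) (basis_vec j)) with C1; [reflexivity|].
  rewrite <- (csum_delta d j (fun _ => C1) Hj).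
  apply csum_ext. intros l _. unfold basis_vec. destruct (Nat.eqb l j); cring.
Qed.

Lemma inner_mat_vec_le_entries A b x y :
  (forall i j, (i < d)%nat -> (j < d)%nat -> Cnorm (A i j) <= b) ->
  Cnorm (inner d (mat_vec d A x) y) <= INR d * INR d * b * vnorm d x * vnorm d y.
Proof.
  intros H. unfold inner. eapply Rle_trans; [apply Cnorm_csum|].
  eapply Rle_trans; [apply (rsum_le _ _ (fun _ => INR d * b * vnorm d x * vnorm d y))|].
  - intros i Hi. rewrite Cnorm_mul, Cnorm_conj.
    apply Rmult_le_compat; auto using Cnorm_nonneg, Cnorm_coord_le_vnorm.
    unfold mat_vec. eapply Rle_trans; [apply Cnorm_csum|].
    eapply Rle_trans; [apply (rsum_le _ _ (fun _ => b * vnorm d x))|].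
    + intros j Hj. rewrite Cnorm_mul.
      apply Rmult_le_compat; auto using Cnorm_nonneg, Cnorm_coord_le_vnorm.
    + rewrite rsum_const. lra.
  - rewrite rsum_const. lra.
Qed.

Lemma opnorm_le_of_inner_le B e : 0 <= e ->
  (forall x y, Cnorm (inner d (mat_vec d B x) y) <= e * vnorm d x * vnorm d y) -> opnorm_le d B e.
Proof.
  intros He H x. specialize (H x (mat_vec d B x)). rewrite inner_self, Cnorm_RtoC in H.
  pose proof (vnorm_nonneg (mat_vec d B x)); pose proof (vnorm_nonneg x).
  set (v := vnorm d (mat_vec d B x)) in *.
  rewrite Rabs_right in H by nra.
  destruct (Req_dec v 0) as [->|Hv]; [nra|].
  apply Rmult_le_reg_r with v; lra.
Qed.

Lemma inner_le_of_opnorm_le B K x y :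
  opnorm_le d B K -> Cnorm (inner d (mat_vec d B x) y) <= K * vnorm d x * vnorm d y.
Proof.
  intros H. eapply Rle_trans; [apply inner_cauchy_schwarz|].
  apply Rmult_le_compat_r; [apply vnorm_nonneg|apply H].
Qed.

Lemma opnorm_le_exists A : exists K, 0 <= K /\ opnorm_le d A K.
Proof.
  set (b := rsum d (fun i => rsum d (fun j => Cnorm (A i j)))).
  assert (Hb : forall i j, (i < d)%nat -> (j < d)%nat -> Cnorm (A i j) <= b).
  { intros i j Hi Hj. unfold b.
    eapply Rle_trans; [|apply (le_rsum_term d (fun i => rsum d (fun j => Cnorm (A i j))) i)];
      [|intros; apply rsum_nonneg; intros; apply Cnorm_nonneg|exact Hi].
    apply (le_rsum_term d (fun j => Cnorm (A i j))); [intros; apply Cnorm_nonneg|exact Hj]. }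
  assert (0 <= b) by (apply rsum_nonneg; intros; apply rsum_nonneg; intros; apply Cnorm_nonneg).
  pose proof (pos_INR d).
  exists (INR d * INR d * b). split; [nra|].
  apply opnorm_le_of_inner_le; [nra|]. intros. now apply inner_mat_vec_le_entries.
Qed.

End Vectors.

(** * Orbits and Cesàro forms *)

Section Orbits.
Variable d : nat.
Variable T : Mat.

Definition orbit (k : nat) (x : Vec) : Vec := Nat.iter k (mat_vec d T) x.

Lemma orbit_succ k x : orbit (S k) x = mat_vec d T (orbit k x).
Proof. reflexivity. Qed.

Lemma orbit_succ_r k x : orbit (S k) x = orbit k (mat_vec d T x).
Proof. apply Nat.iter_succ_r. Qed.

Lemma orbit_add k m x : orbit (k + m) x = orbit k (orbit m x).
Proof. apply Nat.iter_add. Qed.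

Lemma mat_vec_mpow k x : veq d (mat_vec d (mpow d T k) x) (orbit k x).
Proof.
  induction k; cbn [mpow]; [apply mat_vec_mid|].
  intros i Hi. rewrite mat_vec_mmul, (mat_vec_ext d T _ (orbit k x)) by exact IHk. reflexivity.
Qed.

Lemma inner_mpow_madj k u y : inner d (mat_vec d (mpow d (madj T) k) u) y = inner d u (orbit k y).
Proof.
  revert u y. induction k; intros u y; cbn [mpow].
  - apply inner_ext; [apply mat_vec_mid|now intros i _].
  - now rewrite mat_vec_mmul, inner_madj, IHk, orbit_succ_r.
Qed.

Lemma inner_mpow_madj_mpow k x y :
  inner d (mat_vec d (mmul d (mpow d (madj T) k) (mpow d T k)) x) y
  = inner d (orbit k x) (orbit k y).
Proof.
  rewrite mat_vec_mmul, inner_mpow_madj.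
  apply inner_ext; [apply mat_vec_mpow|now intros i _].
Qed.

Definition cesaro_form (n : nat) (x y : Vec) : Cplx :=
  Cmul (RtoC (/ INR n)) (csum n (fun k => inner d (orbit (S k) x) (orbit (S k) y))).

Lemma inner_cesaro n x y : inner d (mat_vec d (cesaro d T n) x) y = cesaro_form n x y.
Proof.
  unfold cesaro, cesaro_form. rewrite inner_mscale, inner_msum.
  f_equal. apply csum_ext. intros. apply inner_mpow_madj_mpow.
Qed.

End Orbits.

Definition form_approx (d : nat) (F : Vec -> Vec -> Cplx) (P : Mat) (e : R) : Prop :=
  forall x y, Cnorm (Csub (F x y) (inner d (mat_vec d P x) y)) <= e * vnorm d x * vnorm d y.

Lemma opnorm_cesaro_sub_le d T P n e : 0 <= e ->
  form_approx d (cesaro_form d T n) P e -> opnorm_le d (msub (cesaro d T n) P) e.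
Proof.
  intros He H. apply opnorm_le_of_inner_le; [exact He|].
  intros x y. rewrite inner_msub, inner_cesaro. apply H.
Qed.

Lemma power_bounded_orbit_le d T : power_bounded d T ->
  exists M, 1 <= M /\ forall k x, vnorm d (orbit d T k x) <= M * vnorm d x.
Proof.
  intros [M0 HM0]. exists (Rabs M0 + 1). split; [pose proof (Rabs_pos M0); lra|].
  intros k x. rewrite <- (vnorm_ext d _ _ (mat_vec_mpow d T k x)).
  eapply Rle_trans; [apply HM0|]. apply Rmult_le_compat_r; [apply vnorm_nonneg|].
  pose proof (Rle_abs M0). lra.
Qed.

Lemma orbit_le_upto d T n0 : exists C, 1 <= C /\
  forall i z, (i <= n0)%nat -> vnorm d (orbit d T i z) <= C * vnorm d z.
Proof.
  induction n0 as [|n0 [C [HC H]]].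
  - exists 1. split; [lra|]. intros i z Hi. replace i with 0%nat by lia. simpl. lra.
  - destruct (opnorm_le_exists d (mpow d T (S n0))) as [K [HK HKT]].
    exists (Rmax C K). split; [eapply Rle_trans; [exact HC|apply Rmax_l]|].
    intros i z Hi. pose proof (vnorm_nonneg d z).
    destruct (Nat.eq_dec i (S n0)) as [->|Hne].
    + rewrite <- (vnorm_ext d _ _ (mat_vec_mpow d T (S n0) z)).
      eapply Rle_trans; [apply HKT|]. apply Rmult_le_compat_r; [lra|apply Rmax_r].
    + eapply Rle_trans; [apply H; lia|]. apply Rmult_le_compat_r; [lra|apply Rmax_l].
Qed.

Lemma orbit_le_of_recurrent d T (G : Vec -> Prop) n0 C R :
  0 <= C ->
  (forall z, G z -> vnorm d z <= R) ->
  (forall z, G z -> exists j, (j < n0)%nat /\ G (orbit d T (S j) z)) ->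
  (forall i z, (i <= n0)%nat -> vnorm d (orbit d T i z) <= C * vnorm d z) ->
  forall m z, G z -> vnorm d (orbit d T m z) <= C * R.
Proof.
  intros HC HR Hreturn Hshort m.
  induction m as [m IH] using (well_founded_induction lt_wf). intros z Hz.
  destruct (le_lt_dec m n0) as [Hm|Hm].
  - eapply Rle_trans; [apply Hshort, Hm|]. apply Rmult_le_compat_l; [exact HC|apply HR, Hz].
  - destruct (Hreturn z Hz) as [j [Hj HGj]].
    replace m with ((m - S j) + S j)%nat by lia. rewrite orbit_add.
    apply IH; [lia|exact HGj].
Qed.

(** * Banach limits *)

Section BanachLimits.
Variable L : (nat -> Cplx) -> Cplx.
Hypothesis HL : BanachLimit L.

Lemma bounded_const c : bounded_seq (fun _ => c).
Proof. exists (Cnorm c). intros; lra. Qed.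

Lemma bounded_add s t : bounded_seq s -> bounded_seq t -> bounded_seq (fun n => Cadd (s n) (t n)).
Proof.
  intros [A HA] [B HB]. exists (A + B). intros n.
  eapply Rle_trans; [apply Cnorm_add|]. specialize (HA n). specialize (HB n). lra.
Qed.

Lemma bounded_scale a s : bounded_seq s -> bounded_seq (fun n => Cmul a (s n)).
Proof.
  intros [B HB]. exists (Cnorm a * B). intros n. rewrite Cnorm_mul.
  apply Rmult_le_compat_l; [apply Cnorm_nonneg|apply HB].
Qed.

Lemma bounded_csum N (f : nat -> nat -> Cplx) :
  (forall k, bounded_seq (f k)) -> bounded_seq (fun n => csum N (fun k => f k n)).
Proof. intros H. induction N; simpl; [apply bounded_const|now apply bounded_add]. Qed.

Lemma bounded_shift s k : bounded_seq s -> bounded_seq (fun n => s (n + k)%nat).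
Proof. intros [B HB]. now exists B. Qed.

Lemma banach_limit_const c : L (fun _ => c) = c.
Proof.
  apply (bl_limit L HL). intros eps He. exists 0%nat. intros.
  replace (Csub c c) with C0 by cring. rewrite Cnorm_C0. lra.
Qed.

Lemma banach_limit_add s t : bounded_seq s -> bounded_seq t ->
  L (fun n => Cadd (s n) (t n)) = Cadd (L s) (L t).
Proof.
  intros Hs Ht. pose proof (bl_linear L HL C1 s t Hs Ht) as H.
  replace (fun n => Cadd (Cmul C1 (s n)) (t n)) with (fun n => Cadd (s n) (t n)) in H
    by (extensionality n; cring).
  rewrite H. cring.
Qed.

Lemma banach_limit_scale a s : bounded_seq s -> L (fun n => Cmul a (s n)) = Cmul a (L s).
Proof.
  intros Hs. pose proof (bl_linear L HL a s (fun _ => C0) Hs (bounded_const C0)) as H.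
  cbv beta in H.
  replace (fun n => Cadd (Cmul a (s n)) C0) with (fun n => Cmul a (s n)) in H
    by (extensionality n; cring).
  rewrite H, banach_limit_const. cring.
Qed.

Lemma banach_limit_csum N (f : nat -> nat -> Cplx) : (forall k, bounded_seq (f k)) ->
  L (fun n => csum N (fun k => f k n)) = csum N (fun k => L (f k)).
Proof.
  intros H. induction N; simpl; [apply banach_limit_const|].
  rewrite banach_limit_add, IHN by (auto using bounded_csum). reflexivity.
Qed.

Lemma banach_limit_shift s k : bounded_seq s -> L (fun n => s (n + k)%nat) = L s.
Proof.
  intros Hs. induction k.
  - f_equal. extensionality n. now rewrite Nat.add_0_r.
  - rewrite <- IHk, <- (bl_shift L HL _ (bounded_shift s k Hs)).
    f_equal. extensionality n. f_equal. lia.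
Qed.

Lemma banach_limit_average_shifts s m : (1 <= m)%nat -> bounded_seq s ->
  L (fun n => Cmul (RtoC (/ INR m)) (csum m (fun k => s (n + S k)%nat))) = L s.
Proof.
  intros Hm Hs.
  rewrite banach_limit_scale by (apply bounded_csum; intros; now apply bounded_shift).
  rewrite (banach_limit_csum m (fun k n => s (n + S k)%nat)) by (intros; now apply bounded_shift).
  rewrite (csum_ext _ _ (fun _ => L s)) by (intros; now apply banach_limit_shift).
  now apply average_const.
Qed.

Lemma banach_limit_le_of_close s z e :
  bounded_seq s -> (forall n, Cnorm (Csub (s n) z) <= e) -> Cnorm (Csub (L s) z) <= e.
Proof.
  intros Hs Hclose.
  replace (Csub (L s) z) with (L (fun n => Cadd (Cmul C1 (s n)) (Copp z))).
  - apply (bl_norm L HL). intros n. replace (Cadd (Cmul C1 (s n)) (Copp z)) with (Csub (s n) z)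
      by cring. apply Hclose.
  - rewrite (bl_linear L HL C1 s (fun _ => Copp z) Hs (bounded_const _)), banach_limit_const. cring.
Qed.

End BanachLimits.

(** * Power-bounded matrices: convergence of the Cesàro means *)

Section PowerBounded.
Variable d : nat.
Variable T : Mat.
Variable M : R.
Hypothesis HM1 : 1 <= M.
Hypothesis HM : forall k x, vnorm d (orbit d T k x) <= M * vnorm d x.

Lemma power_bound_nonneg x y : 0 <= M * M * vnorm d x * vnorm d y.
Proof.
  pose proof (vnorm_nonneg d x); pose proof (vnorm_nonneg d y).
  apply Rmult_le_pos; [apply Rmult_le_pos|]; nra.
Qed.

Lemma orbit_product_le e k x y : 0 <= e ->
  e * vnorm d (orbit d T k x) * vnorm d (orbit d T k y) <= e * (M * M * vnorm d x * vnorm d y).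
Proof.
  intros He. pose proof (vnorm_nonneg d x); pose proof (vnorm_nonneg d y).
  pose proof (vnorm_nonneg d (orbit d T k x)); pose proof (vnorm_nonneg d (orbit d T k y)).
  pose proof (HM k x); pose proof (HM k y).
  replace (e * (M * M * vnorm d x * vnorm d y)) with (e * (M * vnorm d x) * (M * vnorm d y))
    by ring.
  apply Rmult_le_compat; [nra|lra| |assumption]. now apply Rmult_le_compat_l.
Qed.

Lemma inner_orbit_le k x y :
  Cnorm (inner d (orbit d T k x) (orbit d T k y)) <= M * M * vnorm d x * vnorm d y.
Proof.
  eapply Rle_trans; [apply inner_cauchy_schwarz|].
  pose proof (orbit_product_le 1 k x y ltac:(lra)). lra.
Qed.

Lemma cesaro_form_le n x y : Cnorm (cesaro_form d T n x y) <= M * M * vnorm d x * vnorm d y.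
Proof.
  apply Cnorm_average_le; [intros; apply inner_orbit_le|apply power_bound_nonneg].
Qed.

Lemma cesaro_entry_le m i j : (i < d)%nat -> (j < d)%nat -> Cnorm (cesaro d T m i j) <= M * M.
Proof.
  intros Hi Hj. rewrite <- (inner_basis_vec d), inner_cesaro by assumption.
  eapply Rle_trans; [apply cesaro_form_le|]. rewrite !vnorm_basis_vec by assumption. lra.
Qed.

Lemma cesaro_form_cluster : exists P : Mat, forall e, e > 0 -> forall N, exists m, (m >= N)%nat /\
  form_approx d (cesaro_form d T m) P e.
Proof.
  destruct (mat_seq_subseq_cv d (cesaro d T) (M * M) cesaro_entry_le) as [psi [P [Hpsi HP]]].
  exists P. intros e He N. pose proof (pos_INR d).
  set (e' := e / (INR d * INR d + 1)).
  destruct (HP e' ltac:(apply Rdiv_lt_0_compat; nra)) as [N1 HN1].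
  exists (psi (Nat.max N N1)).
  split; [pose proof (strictly_increasing_ge psi Hpsi (Nat.max N N1)); lia|].
  intros x y. rewrite <- inner_cesaro, <- inner_msub.
  eapply Rle_trans; [apply (inner_mat_vec_le_entries d _ e'); intros; apply HN1; lia|].
  pose proof (vnorm_nonneg d x); pose proof (vnorm_nonneg d y).
  assert (INR d * INR d * e' <= e).
  { unfold e'. apply Rmult_le_reg_r with (INR d * INR d + 1); [nra|].
    replace (INR d * INR d * (e / (INR d * INR d + 1)) * (INR d * INR d + 1))
      with (INR d * INR d * e) by (field; nra). nra. }
  repeat apply Rmult_le_compat_r; auto.
Qed.

Lemma cesaro_form_mat_vec m x y :
  Csub (cesaro_form d T m (mat_vec d T x) (mat_vec d T y)) (cesaro_form d T m x y)
  = Cmul (RtoC (/ INR m)) (Csub (inner d (orbit d T (S m) x) (orbit d T (S m) y))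
                                (inner d (orbit d T 1 x) (orbit d T 1 y))).
Proof.
  set (w j := inner d (orbit d T (S j) x) (orbit d T (S j) y)).
  unfold cesaro_form. rewrite (csum_ext m _ (fun k => w (S k)))
    by (intros; unfold w; now rewrite <- !orbit_succ_r).
  change (csum m (fun k => inner d (orbit d T (S k) x) (orbit d T (S k) y))) with (csum m w).
  fold (w m) (w 0%nat).
  replace (Csub (w m) (w 0%nat)) with (Copp (csum m (fun k => Csub (w k) (w (S k)))))
    by (rewrite csum_telescope; cring).
  rewrite csum_sub. cring.
Qed.

Lemma cesaro_form_orbit m k x y :
  cesaro_form d T m (orbit d T (S k) x) (orbit d T (S k) y)
  = Cmul (RtoC (/ INR m))
      (csum m (fun i => inner d (orbit d T (S (k + S i)) x) (orbit d T (S (k + S i)) y))).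
Proof.
  unfold cesaro_form. f_equal. apply csum_ext. intros i _. rewrite <- !orbit_add.
  now replace (S i + S k)%nat with (S (k + S i)) by lia.
Qed.

Lemma cesaro_form_sub_average_le n m x y : (1 <= n)%nat -> (1 <= m)%nat ->
  Cnorm (Csub (cesaro_form d T n x y)
              (Cmul (RtoC (/ INR n))
                 (csum n (fun k => cesaro_form d T m (orbit d T (S k) x) (orbit d T (S k) y)))))
  <= 2 * INR m / INR n * (M * M * vnorm d x * vnorm d y).
Proof.
  intros Hn Hm. set (B := M * M * vnorm d x * vnorm d y).
  set (w j := inner d (orbit d T (S j) x) (orbit d T (S j) y)).
  assert (Hw : forall k, Cnorm (w k) <= B) by (intros; apply inner_orbit_le).
  assert (0 < INR n) by (apply lt_0_INR; lia). assert (0 < INR m) by (apply lt_0_INR; lia).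
  rewrite (csum_ext n _ (fun k => Cmul (RtoC (/ INR m)) (csum m (fun i => w (k + S i)%nat))))
    by (intros; apply cesaro_form_orbit).
  unfold cesaro_form. fold w. rewrite average_sub_double_average by assumption.
  rewrite Cnorm_mul, Cnorm_RtoC, Rabs_right
    by (apply Rle_ge, Rmult_le_pos; apply Rlt_le, Rinv_0_lt_compat; lra).
  apply Rle_trans with (/ INR n * / INR m * (INR m * (2 * INR m * B))).
  - apply Rmult_le_compat_l; [apply Rmult_le_pos; apply Rlt_le, Rinv_0_lt_compat; lra|].
    eapply Rle_trans; [apply Cnorm_csum|]. rewrite <- rsum_const. apply rsum_le. intros i Hi.
    eapply Rle_trans; [apply (Cnorm_csum_sub_shift_le w B), Hw|].
    apply Rmult_le_compat_r; [apply power_bound_nonneg|].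
    apply Rmult_le_compat_l; [lra|]. apply le_INR. lia.
  - right. field. lra.
Qed.

Section ClusterPoint.
Variable P : Mat.
Hypothesis HP : forall e, e > 0 -> forall N, exists m, (m >= N)%nat /\
  form_approx d (cesaro_form d T m) P e.

Lemma cluster_point_invariant x y :
  inner d (mat_vec d P (mat_vec d T x)) (mat_vec d T y) = inner d (mat_vec d P x) y.
Proof.
  set (B := M * M * vnorm d x * vnorm d y).
  apply (Ceq_of_Cnorm_sub_le _ _ (4 * B)). intros e He.
  destruct (eventually_inv_INR_lt e He) as [N HN]. destruct (HP e He N) as [m [Hm Happrox]].
  destruct (HN m Hm) as [Hm0 Hinv].
  assert (Hstep : Cnorm (Csub (cesaro_form d T m (mat_vec d T x) (mat_vec d T y))
                              (cesaro_form d T m x y)) <= e * (2 * B)).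
  { rewrite cesaro_form_mat_vec, Cnorm_mul, Cnorm_RtoC.
    rewrite Rabs_right by (apply Rle_ge, Rlt_le, Rinv_0_lt_compat; lra).
    apply Rmult_le_compat; [apply Rlt_le, Rinv_0_lt_compat; lra|apply Cnorm_nonneg|lra|].
    eapply Rle_trans; [apply Cnorm_sub|].
    pose proof (inner_orbit_le (S m) x y); pose proof (inner_orbit_le 1 x y). unfold B. lra. }
  pose proof (Happrox (mat_vec d T x) (mat_vec d T y)) as HTxy.
  pose proof (orbit_product_le e 1 x y ltac:(lra)) as HTB.
  pose proof (orbit_product_le e 0 x y ltac:(lra)) as HB.
  simpl in HTB, HB.
  eapply Rle_trans;
    [apply (Cnorm_sub_triangle _ (cesaro_form d T m (mat_vec d T x) (mat_vec d T y)))|].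
  rewrite Cnorm_sub_sym.
  eapply Rle_trans; [apply Rplus_le_compat_l, (Cnorm_sub_triangle _ (cesaro_form d T m x y))|].
  pose proof (Happrox x y). fold B in HTB, HB. lra.
Qed.

Lemma cluster_point_orbit_invariant k x y :
  inner d (mat_vec d P (orbit d T k x)) (orbit d T k y) = inner d (mat_vec d P x) y.
Proof. induction k; [reflexivity|]. now rewrite !orbit_succ, cluster_point_invariant. Qed.

Lemma cesaro_form_converges e : e > 0 ->
  exists N, forall n, (n >= N)%nat -> form_approx d (cesaro_form d T n) P e.
Proof.
  intros He. assert (HMM : 0 < M * M) by nra.
  set (e1 := e / (2 * (M * M))). assert (He1 : e1 > 0) by (apply Rdiv_lt_0_compat; lra).
  destruct (HP e1 He1 1%nat) as [m [Hm1 Hm]].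
  assert (Hm0 : 0 < INR m) by (apply lt_0_INR; lia).
  destruct (eventually_inv_INR_lt (e1 / (2 * INR m)) ltac:(apply Rdiv_lt_0_compat; lra)) as [N HN].
  exists (Nat.max N 1). intros n Hn x y. destruct (HN n ltac:(lia)) as [Hn0 Hinv].
  set (B := M * M * vnorm d x * vnorm d y).
  set (p := inner d (mat_vec d P x) y).
  set (G k := cesaro_form d T m (orbit d T (S k) x) (orbit d T (S k) y)).
  replace (Csub (cesaro_form d T n x y) p)
    with (Cadd (Csub (cesaro_form d T n x y) (Cmul (RtoC (/ INR n)) (csum n G)))
               (Cmul (RtoC (/ INR n)) (csum n (fun k => Csub (G k) p))))
    by (rewrite average_sub_const by lia; cring).
  eapply Rle_trans; [apply Cnorm_add|].
  assert (Hfar : Cnorm (Csub (cesaro_form d T n x y) (Cmul (RtoC (/ INR n)) (csum n G))) <= e1 * B).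
  { eapply Rle_trans; [apply cesaro_form_sub_average_le; lia|].
    apply Rmult_le_compat_r; [apply power_bound_nonneg|].
    apply Rmult_le_reg_r with (/ (2 * INR m)); [apply Rinv_0_lt_compat; lra|].
    replace (2 * INR m / INR n * / (2 * INR m)) with (/ INR n) by (field; lra).
    unfold Rdiv in Hinv. lra. }
  assert (Hnear : Cnorm (Cmul (RtoC (/ INR n)) (csum n (fun k => Csub (G k) p))) <= e1 * B).
  { apply Cnorm_average_le; [|apply Rmult_le_pos; [lra|apply power_bound_nonneg]].
    intros k _. unfold G, p. rewrite <- (cluster_point_orbit_invariant (S k) x y).
    eapply Rle_trans; [apply Hm|]. apply orbit_product_le. lra. }
  replace (e * vnorm d x * vnorm d y) with (e1 * B + e1 * B) by (unfold e1, B; field; lra).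
  lra.
Qed.

Lemma banach_limit_orbit_inner L : BanachLimit L -> forall x y,
  L (fun n => inner d (orbit d T n x) (orbit d T n y)) = inner d (mat_vec d P x) y.
Proof.
  intros HL x y. set (s n := inner d (orbit d T n x) (orbit d T n y)).
  set (B := M * M * vnorm d x * vnorm d y).
  assert (Hs : bounded_seq s) by (exists B; intros; apply inner_orbit_le).
  apply (Ceq_of_Cnorm_sub_le _ _ B). intros e He.
  destruct (HP e He 1%nat) as [m [Hm Happrox]].
  rewrite <- (banach_limit_average_shifts L HL s m Hm Hs).
  apply (banach_limit_le_of_close L HL).
  { apply bounded_scale, bounded_csum. intros. now apply bounded_shift. }
  intros n.
  replace (Cmul (RtoC (/ INR m)) (csum m (fun k => s (n + S k)%nat)))
    with (cesaro_form d T m (orbit d T n x) (orbit d T n y)).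
  2: { unfold cesaro_form. f_equal. apply csum_ext. intros k _. unfold s.
       now rewrite <- !orbit_add, Nat.add_comm. }
  rewrite <- (cluster_point_orbit_invariant n x y).
  eapply Rle_trans; [apply Happrox|]. apply orbit_product_le. lra.
Qed.

End ClusterPoint.

End PowerBounded.

Theorem cesaro_cv_of_power_bounded d T : power_bounded d T ->
  exists ATC : Mat,
    mat_cv_norm d (cesaro d T) ATC /\
    (forall L : (nat -> Cplx) -> Cplx, BanachLimit L ->
       forall x y : Vec,
         L (fun n => inner d (mat_vec d (mmul d (mpow d (madj T) n) (mpow d T n)) x) y)
         = inner d (mat_vec d ATC x) y).
Proof.
  intros Hpb. destruct (power_bounded_orbit_le d T Hpb) as [M [HM1 HM]].
  destruct (cesaro_form_cluster d T M HM) as [P HP].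
  exists P. split.
  - intros e He. destruct (cesaro_form_converges d T M HM1 HM P HP e He) as [N HN].
    exists N. intros n Hn. apply opnorm_cesaro_sub_le; [lra|now apply HN].
  - intros L HL x y. rewrite <- (banach_limit_orbit_inner d T M HM P HP L HL x y).
    f_equal. extensionality n. apply inner_mpow_madj_mpow.
Qed.

(** * Matrices with convergent Cesàro means are power bounded *)

Section ConvergentCesaro.
Variable d : nat.
Variable T A : Mat.
Hypothesis Hconv : mat_cv_norm d (cesaro d T) A.

Definition quad_form (x : Vec) : R := fst (inner d (mat_vec d A x) x).

Definition cesaro_energy (n : nat) (x : Vec) : R :=
  / INR n * rsum n (fun k => vnorm d (orbit d T (S k) x) * vnorm d (orbit d T (S k) x)).

Lemma fst_cesaro_form_self n x : fst (cesaro_form d T n x x) = cesaro_energy n x.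
Proof.
  unfold cesaro_form, cesaro_energy. cunfold. rewrite fst_csum, snd_csum.
  rewrite Rmult_0_l, Rminus_0_r. f_equal. apply rsum_ext. intros. now rewrite vnorm_sq.
Qed.

Lemma cesaro_energy_approx e : e > 0 -> exists N, forall n, (n >= N)%nat ->
  forall x, Rabs (cesaro_energy n x - quad_form x) <= e * (vnorm d x * vnorm d x).
Proof.
  intros He. destruct (Hconv e He) as [N HN]. exists N. intros n Hn x.
  pose proof (inner_le_of_opnorm_le d _ _ x x (HN n Hn)) as H.
  rewrite inner_msub, inner_cesaro in H.
  rewrite <- fst_cesaro_form_self. unfold quad_form.
  eapply Rle_trans; [|eapply Rle_trans; [apply H|right; ring]].
  eapply Rle_trans; [|apply Rabs_fst_le_Cnorm]. right. reflexivity.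
Qed.

Lemma cesaro_energy_cv x : Un_cv (fun n => cesaro_energy n x) (quad_form x).
Proof.
  intros e He. pose proof (vnorm_nonneg d x).
  set (X := vnorm d x * vnorm d x + 1). assert (HX : 0 < X) by (unfold X; nra).
  destruct (cesaro_energy_approx (e / (2 * X)) ltac:(apply Rdiv_lt_0_compat; lra)) as [N HN].
  exists N. intros n Hn. unfold Rdist. eapply Rle_lt_trans; [apply HN, Hn|].
  apply Rle_lt_trans with (e / (2 * X) * X).
  - apply Rmult_le_compat_l; [apply Rlt_le, Rdiv_lt_0_compat; lra|unfold X; lra].
  - replace (e / (2 * X) * X) with (e / 2) by (field; lra). lra.
Qed.

Lemma cesaro_energy_mat_vec n x :
  cesaro_energy (S n) (mat_vec d T x)
  = INR (S (S n)) * / INR (S n) * cesaro_energy (S (S n)) x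
    - vnorm d (mat_vec d T x) * vnorm d (mat_vec d T x) * / INR (S n).
Proof.
  set (a k := vnorm d (orbit d T k x) * vnorm d (orbit d T k x)).
  unfold cesaro_energy.
  change (vnorm d (mat_vec d T x) * vnorm d (mat_vec d T x)) with (a 1%nat).
  rewrite (rsum_ext _ (fun k => vnorm d (orbit d T (S k) (mat_vec d T x)) * _)
                      (fun k => a (S (S k))))
    by (intros; unfold a; now rewrite <- orbit_succ_r).
  change (rsum (S (S n)) (fun k => vnorm d (orbit d T (S k) x) * vnorm d (orbit d T (S k) x)))
    with (rsum (S (S n)) (fun k => a (S k))).
  rewrite (rsum_succ_l (S n) (fun k => a (S k))). assert (0 < INR (S n)) by (apply lt_0_INR; lia).
  assert (0 < INR (S (S n))) by (apply lt_0_INR; lia).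
  field. lra.
Qed.

Lemma quad_form_invariant x : quad_form (mat_vec d T x) = quad_form x.
Proof.
  set (c := vnorm d (mat_vec d T x) * vnorm d (mat_vec d T x)).
  apply (UL_sequence (fun n => cesaro_energy (S n) (mat_vec d T x))).
  - apply (Un_cv_ext (fun n => cesaro_energy (n + 1) (mat_vec d T x)));
      [intros; now rewrite Nat.add_1_r|].
    apply (CV_shift' (fun n => cesaro_energy n (mat_vec d T x))), cesaro_energy_cv.
  - apply (Un_cv_ext (fun n => (1 + / INR (S n)) * cesaro_energy (n + 2) x - c * / INR (S n))).
    { intros n. rewrite cesaro_energy_mat_vec, Nat.add_succ_r, Nat.add_1_r.
      assert (0 < INR (S n)) by (apply lt_0_INR; lia).
      rewrite (S_INR (S n)). fold c. field. lra. }
    replace (quad_form x) with ((1 + 0) * quad_form x - c * 0) by ring.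
    apply CV_minus; apply CV_mult; [apply CV_plus| | |];
      auto using Un_cv_const, Un_cv_inv_INR_S.
    apply (CV_shift' (fun n => cesaro_energy n x)), cesaro_energy_cv.
Qed.

Lemma quad_form_orbit_invariant k x : quad_form (orbit d T k x) = quad_form x.
Proof. induction k; [reflexivity|]. now rewrite orbit_succ, quad_form_invariant. Qed.

Lemma quad_form_le : exists K, 0 <= K /\ forall z, quad_form z <= K * (vnorm d z * vnorm d z).
Proof.
  destruct (opnorm_le_exists d A) as [K [HK HKA]]. exists K. split; [exact HK|]. intros z.
  unfold quad_form. eapply Rle_trans; [apply Rle_abs|].
  eapply Rle_trans; [apply Rabs_fst_le_Cnorm|].
  eapply Rle_trans; [apply (inner_le_of_opnorm_le d A K z z HKA)|]. right. ring.
Qed.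

Lemma orbit_energy_return : exists n0, forall z, exists j, (j < n0)%nat /\
  vnorm d (orbit d T (S j) z) * vnorm d (orbit d T (S j) z)
  <= quad_form z + / 4 * (vnorm d z * vnorm d z).
Proof.
  destruct (cesaro_energy_approx (/ 4) ltac:(lra)) as [N HN].
  exists (Nat.max N 1). intros z. apply exists_term_le_of_rsum_le; [lia|].
  specialize (HN (Nat.max N 1) ltac:(lia) z). unfold cesaro_energy in HN.
  assert (Hpos : 0 < INR (Nat.max N 1)) by (apply lt_0_INR; lia).
  eapply Rle_trans in HN; [|apply Rle_abs].
  apply Rmult_le_reg_l with (/ INR (Nat.max N 1)); [now apply Rinv_0_lt_compat|].
  rewrite <- Rmult_assoc, Rinv_l, Rmult_1_l by lra. lra.
Qed.

End ConvergentCesaro.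

Theorem power_bounded_of_cesaro_cv d T A : mat_cv_norm d (cesaro d T) A -> power_bounded d T.
Proof.
  intros Hconv.
  destruct (orbit_energy_return d T A Hconv) as [n0 Hreturn].
  destruct (quad_form_le d A) as [K [HK HqK]].
  destruct (orbit_le_upto d T n0) as [C [HC Hshort]].
  exists (C * (K + 2)). intros m x. rewrite (vnorm_ext d _ _ (mat_vec_mpow d T m x)), Rmult_assoc.
  pose proof (vnorm_nonneg d x) as Hx.
  (* [G] is closed under the returns of [orbit_energy_return]: K + (K + 2)^2 / 4 <= (K + 2)^2. *)
  set (G z := quad_form d A z = quad_form d A x /\ vnorm d z <= (K + 2) * vnorm d x).
  apply (orbit_le_of_recurrent d T G n0);
    [lra|now intros z []| |exact Hshort|split; [reflexivity|nra]].
  intros z [Hqz Hz]. destruct (Hreturn z) as [j [Hj Hjz]]. exists j. split; [exact Hj|split].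
  - now rewrite (quad_form_orbit_invariant d T A Hconv), Hqz.
  - pose proof (HqK x). pose proof (vnorm_nonneg d z).
    apply Rsqr_incr_0; [unfold Rsqr|apply vnorm_nonneg|nra].
    rewrite Hqz in Hjz. nra.
Qed.

Theorem mainTheorem6 (d : nat) :
  (forall T : Mat, power_bounded d T ->
     exists ATC : Mat,
       mat_cv_norm d (cesaro d T) ATC /\
       (forall L : (nat -> Cplx) -> Cplx, BanachLimit L ->
          forall x y : Vec,
            L (fun n => inner d (mat_vec d (mmul d (mpow d (madj T) n) (mpow d T n)) x) y)
            = inner d (mat_vec d ATC x) y)) /\
  (forall T : Mat, (exists A : Mat, mat_cv_norm d (cesaro d T) A) ->
     power_bounded d T).
Proof.
  split.
  - apply cesaro_cv_of_power_bounded.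
  - intros T [A HA]. exact (power_bounded_of_cesaro_cv d T A HA).
Qed.
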